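(* Let $\mathcal{G}=(N,\mathcal{W})$ be an SVG, let $i\neq j$ be players with $j$ a YES-blocker of $\mathcal{G}$, and let $\hat{\mathcal{G}}=\mathcal{G}^{j\to i}$. Let $S\subseteq N\setminus\{i,j\}$ satisfy $S\cup\{i,j\}\notin\mathcal{W}$. Then $$\hat\alpha^-_i(S)\le \alpha^-_i(S)+\alpha^-_j(S),$$ where $\alpha^-$ denotes NO-efficacy scores of the Recursive Measure in $\mathcal{G}$, and $\hat\alpha^-$ denotes the same in $\hat{\mathcal{G}}$.
   Context: A simple voting game (SVG) is a pair $\mathcal{G}=(N,\mathcal{W})$ with $N$ a nonempty finite set of players and $\mathcal{W}\subseteq 2^N$ monotone, $\emptyset\notin\mathcal{W}$, $N\in\mathcal{W}$. Divisions are identified with their YES-sets $S\subseteq N$; $S$ is winning iff $S\in\mathcal{W}$. Decisiveness and success: - Player $k$ is YES-decisive in $S$ if $k\in S\in\mathcal{W}$ and $S\setminus\{k\}\notin\mathcal{W}$. - Player $k$ is NO-decisive in $S$ if $k\notin S\notin\mathcal{W}$ and $S\cup\{k\}\in\mathcal{W}$. - Player $k$ is successful in $S$ if ($k\in S\in\mathcal{W}$) or ($k\notin S\notin\mathcal{W}$). Loyal children: if $S\in\mathcal{W}$, they are the sets $S\setminus\{m\}\in\mathcal{W}$ with $m\in S$. If $S\notin\mathcal{W}$, they are the sets $S\cup\{m\}\notin\mathcal{W}$ with $m\notin S$. Recursive efficacy score $\alpha_k(S)$: - $\alpha_k(S)=1$ if $k$ is YES- or NO-decisive in $S$; - $\alpha_k(S)=0$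 if $k$ is not successful; - otherwise, the average of $\alpha_k$ over the loyal children of $S$. The NO-efficacy score is $\alpha^-_k(S)=\alpha_k(S)$ if $k\notin S$ and $0$ if $k\in S$. Blockers: $j$ is a YES-blocker if $j\in S$ for all $S\in\mathcal{W}$. Donation game: $\mathcal{G}^{j\to i}$ is the SVG on $N$ in which, for $S\subseteq N\setminus\{i,j\}$: - $S\cup\{i,j\}$ and $S\cup\{i\}$ are winning iff $S\cup\{i,j\}\in\mathcal{W}$; - $S\cup\{j\}$ and $S$ are winning iff $S\in\mathcal{W}$. *)

From HB Require Import structures.
From mathcomp Require Import all_boot all_order all_algebra.
Set Implicit Arguments. Unset Strict Implicit. Unset Printing Implicit Defensive.
Import Order.TTheory GRing.Theory Num.Theory.
Local Open Scope ring_scope.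

Section SVG.
Variable N : finType.

Definition svg (W : {set {set N}}) : Prop :=
  [/\ forall S T : {set N}, S \subset T -> S \in W -> T \in W,
      set0 \notin W & [set: N] \in W].

Definition yes_decisive (W : {set {set N}}) (k : N) (S : {set N}) : bool :=
  [&& k \in S, S \in W & S :\ k \notin W].
Definition no_decisive (W : {set {set N}}) (k : N) (S : {set N}) : bool :=
  [&& k \notin S, S \notin W & k |: S \in W].
Definition successful (W : {set {set N}}) (k : N) (S : {set N}) : bool :=
  (k \in S) && (S \in W) || (k \notin S) && (S \notin W).

(* Loyal children of S, indexed by the player m that switches. *)
Definition loyal_idx (W : {set {set N}}) (S : {set N}) : {set N} :=
  if S \in W then [set m in S | S :\ m \in W]
  else [set m in ~: S | m |: S \notin W].
Definition loyal_child (W : {set {set N}}) (S : {set N}) (m : N) : {set N} :=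
  if S \in W then S :\ m else m |: S.

(* Loyal children of a
   winning set are winning and strictly smaller; loyal children of a losing
   set are losing and strictly larger; hence recursion depth is at most
   #|N| and fuel #|N|.+1 is never exhausted. *)
Fixpoint alpha_fuel (W : {set {set N}}) (k : N) (n : nat) (S : {set N}) : rat :=
  match n with
  | 0 => 0
  | n'.+1 =>
    if yes_decisive W k S || no_decisive W k S then 1
    else if ~~ successful W k S then 0
    else (\sum_(m in loyal_idx W S) alpha_fuel W k n' (loyal_child W S m))
           / #|loyal_idx W S|%:R
  end.

Definition alpha (W : {set {set N}}) (k : N) (S : {set N}) : rat :=
  alpha_fuel W k #|N|.+1 S.

Definition alpha_no (W : {set {set N}}) (k : N) (S : {set N}) : rat :=
  if k \in S then 0 else alpha W k S.

Definition yes_blocker (W : {set {set N}}) (j : N) : Prop :=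
  forall S, S \in W -> j \in S.

Definition donate (W : {set {set N}}) (i j : N) : {set {set N}} :=
  [set T : {set N} |
     let S0 := T :\: [set i; j] in
     if i \in T then S0 :|: [set i; j] \in W else S0 \in W].

End SVG.

From mathcomp Require Import all_boot all_order all_algebra.
From mathcomp Require Import ring lra.
Set Implicit Arguments. Unset Strict Implicit. Unset Printing Implicit Defensive.
Import Order.TTheory GRing.Theory Num.Theory.
Local Open Scope ring_scope.

(* As j blocks every winning coalition, T wins the donation game iff i is in
   T and T ∪ {i,j} wins the original one: i inherits j's veto.  For T avoiding
   i and j, induction on the complement of T gives
     alpha^_i(T) = alpha_j(T ∪ {i}) = alpha^_i(T ∪ {j})  and
     alpha_i(T) + alpha_j(T) >= 1 when T ∪ {i,j} wins.
   When T ∪ {i,j} loses, every T ∪ {m} is a loyal child of T in both games, so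
   all three scores are averages over the same children: i and j contribute
   alpha_j(T ∪ {i}) on the left and at least as much on the right, and any other
   child m is bounded by the second fact or by induction. *)

Section Recursion.
Variable N : finType.
Implicit Types (W : {set {set N}}) (S : {set N}).

Lemma cardsC_setU1 S (x : N) : x \notin S -> #|~: S| = #|~: (x |: S)|.+1.
Proof.
move=> xS; rewrite (cardsD1 x (~: S)) inE xS add1n; congr _.+1.
by apply: eq_card => y; rewrite !inE negb_or andbC.
Qed.

Lemma sum_setC_setU1 (F : N -> rat) (x : N) S : x \notin S ->
  \sum_(m in ~: S) F m = F x + \sum_(m in ~: (x |: S)) F m.
Proof.
move=> xS; rewrite (big_setD1 x) ?inE //; congr (_ + _).
by apply: eq_bigl => y; rewrite !inE negb_or andbC.
Qed.

Lemma setU1_ind (P : {set N} -> Prop) :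
  (forall S, (forall m, m \notin S -> P (m |: S)) -> P S) -> forall S, P S.
Proof.
move=> IH S; have [n] := ubnP #|~: S|; elim: n S => // n IHn S hS.
by apply: IH => m mS; apply: IHn; rewrite -ltnS -cardsC_setU1.
Qed.

(* Loyal children of a losing set are losing supersets, so the fuel only
   needs to exceed the size of the complement. *)
Lemma alpha_fuel_losing W k n n' S : S \notin W ->
  (#|~: S| < n)%N -> (#|~: S| < n')%N -> alpha_fuel W k n S = alpha_fuel W k n' S.
Proof.
elim: n n' S => [|n IH] [|n'] S SW //= hn hn'.
rewrite /loyal_idx /loyal_child (negbTE SW); do 2 case: ifP => // _.
congr (_ / _); apply: eq_bigr => x; rewrite !inE => /andP[xS xW].
by apply: IH; rewrite // -ltnS -cardsC_setU1.
Qed.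

Lemma alpha_losingE W k S : S \notin W -> alpha W k S =
  if (k \notin S) && (k |: S \in W) then 1 else if k \in S then 0 else
  (\sum_(m in [set m in ~: S | m |: S \notin W]) alpha W k (m |: S))
     / #|[set m in ~: S | m |: S \notin W]|%:R.
Proof.
move=> SW; rewrite [alpha W k S]/alpha [alpha_fuel _ _ _ S]/=.
rewrite /yes_decisive /no_decisive /successful.
rewrite /loyal_idx /loyal_child (negbTE SW) /= !andbF /= !andbT.
case: (k \in S) => //=; case: (k |: S \in W) => //=.
congr (_ / _); apply: eq_bigr => x; rewrite !inE => /andP[xS xW].
have := max_card (mem (~: S)); rewrite (cardsC_setU1 xS) => hS.
by apply: alpha_fuel_losing => //; apply: ltnW.
Qed.

Lemma alpha_no_decisive W k S : k \notin S -> S \notin W -> k |: S \in W ->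
  alpha W k S = 1.
Proof. by move=> kS SW kSW; rewrite alpha_losingE // kS kSW. Qed.

Lemma alpha_losing_mem W k S : k \in S -> S \notin W -> alpha W k S = 0.
Proof. by move=> kS SW; rewrite alpha_losingE // kS. Qed.

Lemma alpha_losing_avg W k S : S \notin W -> k \notin S ->
  (forall m, m \notin S -> m |: S \notin W) ->
  alpha W k S = (\sum_(m in ~: S) alpha W k (m |: S)) / #|~: S|%:R.
Proof.
move=> SW kS loyal; rewrite alpha_losingE // kS (negbTE (loyal k kS)) /= (negbTE kS).
suff -> : [set m in ~: S | m |: S \notin W] = ~: S by [].
by apply/setP => x; rewrite !inE; apply/andb_idr/loyal.
Qed.

Lemma alpha_fuel_bounds W k n S : 0 <= alpha_fuel W k n S <= 1.
Proof.
elim: n S => [|n IH] S /=; first by rewrite ?lexx ?ler01.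
do 2 (case: ifP => _; first by rewrite ?lexx ?ler01).
set L := loyal_idx W S; set s := \sum_(m in L) _.
have s_ge0 : 0 <= s by apply: sumr_ge0 => m _; case/andP: (IH (loyal_child W S m)).
have s_le : s <= #|L|%:R.
  rewrite -sum1_card natr_sum; apply: ler_sum => m _.
  by case/andP: (IH (loyal_child W S m)).
rewrite divr_ge0 //=; case: (posnP #|L|) => [->|L_gt0].
  by rewrite invr0 mulr0 ler01.
by rewrite ler_pdivrMr ?ltr0n // mul1r.
Qed.

Lemma alpha_ge0 W k S : 0 <= alpha W k S.
Proof. by case/andP: (alpha_fuel_bounds W k #|N|.+1 S). Qed.

Lemma alpha_le1 W k S : alpha W k S <= 1.
Proof. by case/andP: (alpha_fuel_bounds W k #|N|.+1 S). Qed.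

End Recursion.

Section Donation.
Variables (N : finType) (W : {set {set N}}) (i j : N).
Hypotheses (svgW : svg W) (neq_ij : i != j) (blocker_j : yes_blocker W j).
Local Notation Wh := (donate W i j).
Local Notation IJ := [set i; j].
Implicit Types (T X : {set N}).

Lemma losing_notin_blocker T : j \notin T -> T \notin W.
Proof. by apply: contra => /blocker_j. Qed.

Lemma setU1ij T : i |: (j |: T) = T :|: IJ.
Proof. by rewrite setUA setUC. Qed.

Lemma setU1ji T : j |: (i |: T) = T :|: IJ.
Proof. by rewrite setUCA setU1ij. Qed.

Lemma setU1IJ x T : x \in IJ -> (x |: T) :|: IJ = T :|: IJ.
Proof.
move=> xIJ; rewrite -setUA setUCA.
by have /setUidPr -> : [set x] \subset IJ by rewrite sub1set.
Qed.

Lemma setU1IJ_i T : (i |: T) :|: IJ = T :|: IJ.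
Proof. by rewrite setU1IJ ?setU11. Qed.

Lemma setU1IJ_j T : (j |: T) :|: IJ = T :|: IJ.
Proof. by rewrite setU1IJ // !inE eqxx orbT. Qed.

Lemma donateE T : (T \in Wh) = (i \in T) && (T :|: IJ \in W).
Proof.
rewrite inE /=; case: ifP => iT /=.
  by rewrite setDE setUIl [~: _ :|: _]setUC setUCr setIT.
by apply/negbTE/losing_notin_blocker; rewrite !inE eqxx orbT.
Qed.

Lemma donate_child_losing X m : i \notin X -> X :|: IJ \notin W -> m |: X \notin Wh.
Proof.
move=> iX XIJ; rewrite donateE !inE (negbTE iX) orbF.
by apply/nandP; case: eqP => [<-|]; [right; rewrite setU1IJ_i | left].
Qed.

Lemma child_losing X m : j \notin X -> X :|: IJ \notin W -> m |: X \notin W.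
Proof.
case: svgW => mono _ _ jX XIJ; case: (eqVneq m j) => [->|mj].
  by apply: contra XIJ; apply: mono; rewrite setUC setUS // sub1set !inE eqxx orbT.
by apply: losing_notin_blocker; rewrite !inE negb_or eq_sym mj.
Qed.

Lemma avoid_setU1 T m : i \notin T -> j \notin T -> m \in ~: (T :|: IJ) ->
  (i \notin m |: T) && (j \notin m |: T).
Proof.
rewrite !inE !negb_or => iT jT /and3P[_ mi mj].
by rewrite iT jT !andbT !(eq_sym _ m) mi mj.
Qed.

Lemma avoid_ind (P : {set N} -> Prop) :
  (forall T, i \notin T -> j \notin T ->
     (forall m, m \in ~: (T :|: IJ) -> P (m |: T)) -> P T) ->
  forall T, i \notin T -> j \notin T -> P T.
Proof.
move=> IH; apply: setU1_ind => T IHT iT jT; apply: IH => // m mT.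
have /andP[imT jmT] := avoid_setU1 iT jT mT.
by apply: IHT => //; move: mT; rewrite !inE negb_or => /andP[].
Qed.

Lemma alpha_losing_split (V : {set {set N}}) k T :
  i \notin T -> j \notin T -> T \notin V -> k \notin T ->
  (forall m, m \notin T -> m |: T \notin V) ->
  alpha V k T = (alpha V k (i |: T) + alpha V k (j |: T)
                 + \sum_(m in ~: (T :|: IJ)) alpha V k (m |: T))
                / (#|~: (T :|: IJ)|.+2)%:R.
Proof.
move=> iT jT TV kT loyal.
have jiT : j \notin i |: T by rewrite !inE negb_or eq_sym neq_ij.
rewrite alpha_losing_avg // (sum_setC_setU1 _ iT) (sum_setC_setU1 _ jiT).
by rewrite (cardsC_setU1 iT) (cardsC_setU1 jiT) setU1ji addrA.
Qed.

Lemma alpha_donateE T : i \notin T -> j \notin T ->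
  alpha Wh i T = alpha W j (i |: T) /\ alpha Wh i (j |: T) = alpha W j (i |: T).
Proof.
move: T; apply: avoid_ind => T iT jT IH.
have ijT : i \notin j |: T by rewrite !inE negb_or neq_ij.
have jiT : j \notin i |: T by rewrite !inE negb_or eq_sym neq_ij.
have iTW : i |: T \notin W by apply: losing_notin_blocker.
have TWh : T \notin Wh by rewrite donateE (negbTE iT).
have jTWh : j |: T \notin Wh by rewrite donateE (negbTE ijT).
have [TIJ | TIJ] := boolP (T :|: IJ \in W).
  rewrite !alpha_no_decisive ?setU1ji //.
  - by rewrite donateE setU11 setU1IJ_i setU1IJ_j.
  - by rewrite donateE setU11 setU1IJ_i.
set c := #|~: (T :|: IJ)|; set s := \sum_(m in ~: (T :|: IJ)) alpha W j (i |: (m |: T)).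
have avg_jT : alpha Wh i (j |: T) = s / c.+1%:R.
  have loyal m : m |: (j |: T) \notin Wh.
    by apply: donate_child_losing; rewrite ?setU1IJ_j.
  rewrite alpha_losing_avg // (sum_setC_setU1 _ ijT) (cardsC_setU1 ijT).
  rewrite alpha_losing_mem ?setU11 // add0r setU1ij.
  by congr (_ / _); apply: eq_bigr => m /IH[_ <-]; rewrite setUCA.
have avg_iT : alpha W j (i |: T) = s / c.+1%:R.
  have loyal m : m |: (i |: T) \notin W by apply: child_losing; rewrite ?setU1IJ_i.
  rewrite alpha_losing_avg // (sum_setC_setU1 _ jiT) (cardsC_setU1 jiT).
  rewrite alpha_losing_mem ?setU11 // add0r setU1ji.
  by congr (_ / _); apply: eq_bigr => m _; rewrite setUCA.
split; last by rewrite avg_jT avg_iT.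
have loyal m : m |: T \notin Wh by apply: donate_child_losing.
rewrite alpha_losing_split // alpha_losing_mem ?setU11 // add0r avg_jT avg_iT.
rewrite (eq_bigr _ (fun m mT => proj1 (IH m mT))) -/s.
rewrite -/c -(addn1 c.+1) natrD; field.
by rewrite nat1r natr1 !pnatr_eq0.
Qed.

Lemma alpha_sum_ge1 T : i \notin T -> j \notin T -> T :|: IJ \in W ->
  1 <= alpha W i T + alpha W j T.
Proof.
move: T; apply: avoid_ind => T iT jT IH TIJ.
have TW : T \notin W by apply: losing_notin_blocker.
have [jTW | jTW] := boolP (j |: T \in W).
  by rewrite [alpha W j T]alpha_no_decisive // lerDr alpha_ge0.
have loyal m : m \notin T -> m |: T \notin W.
  move=> mT; case: (eqVneq m j) => [-> // | mj].
  by apply: losing_notin_blocker; rewrite !inE negb_or eq_sym mj.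
have ijT : i \notin j |: T by rewrite !inE negb_or neq_ij.
have jiT : j \notin i |: T by rewrite !inE negb_or eq_sym neq_ij.
rewrite (alpha_losing_split iT jT TW iT loyal) (alpha_losing_split iT jT TW jT loyal).
rewrite (alpha_losing_mem (setU11 _ _) (loyal i iT)).
rewrite (alpha_losing_mem (setU11 _ _) (loyal j jT)).
rewrite (alpha_no_decisive ijT jTW) ?setU1ij //.
rewrite (alpha_no_decisive jiT (loyal i iT)) ?setU1ji //.
have sum_ge : #|~: (T :|: IJ)|%:R <=
    \sum_(m in ~: (T :|: IJ)) (alpha W i (m |: T) + alpha W j (m |: T)).
  rewrite -sum1_card natr_sum; apply: ler_sum => m mT; apply: IH => //.
  by case: svgW => mono _ _; apply: mono TIJ; rewrite -setUA subsetUr.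
rewrite big_split /= in sum_ge.
rewrite -mulrDl ler_pdivlMr ?ltr0n // mul1r -!natr1.
move: sum_ge; set c := _%:R; set si := \sum_(m in _) _; set sj := \sum_(m in _) _.
lra.
Qed.

Lemma alpha_donate_le T : i \notin T -> j \notin T -> T :|: IJ \notin W ->
  alpha Wh i T <= alpha W i T + alpha W j T.
Proof.
move: T; apply: avoid_ind => T iT jT IH TIJ.
have loyal m : m |: T \notin W by apply: child_losing.
have loyalh m : m |: T \notin Wh by apply: donate_child_losing.
have TW : T \notin W by apply: losing_notin_blocker.
have TWh : T \notin Wh by rewrite donateE (negbTE iT).
rewrite (alpha_losing_split iT jT TWh iT (fun m _ => loyalh m)).
rewrite (alpha_losing_split iT jT TW iT (fun m _ => loyal m)).
rewrite (alpha_losing_split iT jT TW jT (fun m _ => loyal m)).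
rewrite (alpha_losing_mem (setU11 _ _) (loyalh i)).
rewrite (alpha_losing_mem (setU11 _ _) (loyal i)) (alpha_losing_mem (setU11 _ _) (loyal j)).
rewrite (proj2 (alpha_donateE iT jT)).
have sum_le : \sum_(m in ~: (T :|: IJ)) alpha Wh i (m |: T) <=
    \sum_(m in ~: (T :|: IJ)) (alpha W i (m |: T) + alpha W j (m |: T)).
  apply: ler_sum => m mT; have [mTIJ | mTIJ] := boolP ((m |: T) :|: IJ \in W).
    have /andP[imT jmT] := avoid_setU1 iT jT mT.
    exact: le_trans (alpha_le1 _ _ _) (alpha_sum_ge1 imT jmT mTIJ).
  by apply: IH.
rewrite big_split /= in sum_le.
rewrite -mulrDl ler_wpM2r ?invr_ge0 ?ler0n //.
move: sum_le (alpha_ge0 W i (j |: T)).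
move: (\sum_(m in _) _) (\sum_(m in _) _) (\sum_(m in _) _) (alpha W _ _) (alpha W _ _).
move=> sh si sj a b; lra.
Qed.

End Donation.

Theorem claim1 (N : finType) (W : {set {set N}}) (i j : N) (S : {set N}) :
  svg W -> i != j -> yes_blocker W j ->
  S \subset ~: [set i; j] -> S :|: [set i; j] \notin W ->
  alpha_no (donate W i j) i S <= alpha_no W i S + alpha_no W j S.
Proof.
move=> svgW neq_ij blocker_j /subsetP S_avoid SIJ.
have iS : i \notin S by apply/negP => /S_avoid; rewrite !inE eqxx.
have jS : j \notin S by apply/negP => /S_avoid; rewrite !inE eqxx orbT.
rewrite /alpha_no (negbTE iS) (negbTE jS).
exact: alpha_donate_le.
Qed.
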